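(* Let $n>30$ with $n\equiv 0\pmod 6$, and let $\mathcal{H}$ and $\Pi$ be as defined in the context. Let $M$ be a maximal subgroup of $S_n$ that is imprimitive (i.e. the stabilizer of a partition of $\{1,\dots,n\}$ into $\ell$ blocks of size $k$, with $k\ell=n$, $k,\ell\ge 2$) and $M\notin\mathcal{H}$. Then $|M\cap\Pi|<|H\cap\Pi|$ for every $H\in\mathcal{H}$.
   Context: $S_n$ is the symmetric group on $\{1,\dots,n\}$, $n\equiv 0\pmod 6$. $\mathcal{H}$ consists of: all stabilizers in $S_n$ of partitions of $\{1,\dots,n\}$ into two blocks of size $n/2$ (a stabilizer may swap the blocks); $A_n$; and, for $1\le i\le n/3-1$, all setwise stabilizers of $i$-element subsets. $\Pi=\bigcup_{i=-1}^{n/3-1}\Pi_i$ where (cycle lengths listed account for all $n$ points): $\Pi_{-1}$ = $n$-cycles; $\Pi_0$ = products of two disjoint cycles of lengths $n/2-1,n/2+1$ if $n/2$ is even, resp. $n/2-2,n/2+2$ if $n/2$ is odd; $\Pi_1$ = elements with exactly one fixed point and two further cycles of lengths $n/2-2,n/2+1$; for odd $3\le i\le n/3-1$, $\Pi_i$ = products of three disjoint cycles of lengths $i,(n-i-1)/2,(n-i+1)/2$; for even $2\le i\le n/3-1$ with $(n-i)/2$ odd, lengths $i,(n-i)/2,(n-i)/2$; for even $4\le i\le n/3-1$ with $(n-i)/2$ even, lengths $i,(n-i)/2-1,(n-i)/2+1$; if $(n-2)/2$ is even, $\Pi_2$ has lengths $2,n/2-4,n/2+2$. *)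

From mathcomp Require Import all_boot all_fingroup all_solvable.
Set Implicit Arguments. Unset Strict Implicit. Unset Printing Implicit Defensive.

(* S_n is the full permutation group of 'I_n (points 0..n-1 instead of 1..n). *)

(* Multiset of cycle lengths of s (fixed points count as cycles of length 1). *)
Definition cycle_lengths n (s : {perm 'I_n}) : seq nat :=
  [seq #|(X : {set 'I_n})| | X <- enum (porbits s)].

Definition has_cycle_type n (s : {perm 'I_n}) (c : seq nat) : bool :=
  perm_eq (cycle_lengths s) c.

(* The set Pi = union of Pi_i, i = -1, ..., n/3 - 1. *)
Definition inPi n (s : {perm 'I_n}) : bool :=
  [|| (* Pi_{-1} *)
      has_cycle_type s [:: n],
      (* Pi_0 *)
      ~~ odd (n %/ 2) && has_cycle_type s [:: n %/ 2 - 1; n %/ 2 + 1],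
      odd (n %/ 2) && has_cycle_type s [:: n %/ 2 - 2; n %/ 2 + 2],
      (* Pi_1 *)
      has_cycle_type s [:: 1; n %/ 2 - 2; n %/ 2 + 1],
      [exists i : 'I_n, [&& odd i, 3 <= i, i <= n %/ 3 - 1 &
        has_cycle_type s [:: val i; (n - i - 1) %/ 2; (n - i + 1) %/ 2]]],
      [exists i : 'I_n, [&& ~~ odd i, 2 <= i, i <= n %/ 3 - 1, odd ((n - i) %/ 2) &
        has_cycle_type s [:: val i; (n - i) %/ 2; (n - i) %/ 2]]],
      [exists i : 'I_n, [&& ~~ odd i, 4 <= i, i <= n %/ 3 - 1, ~~ odd ((n - i) %/ 2) &
        has_cycle_type s [:: val i; (n - i) %/ 2 - 1; (n - i) %/ 2 + 1]]]
    | (* Pi_2 when (n-2)/2 is even *)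
      ~~ odd ((n - 2) %/ 2) && has_cycle_type s [:: 2; n %/ 2 - 4; n %/ 2 + 2]].

Definition Pi n : {set {perm 'I_n}} := [set s | inPi s].

Definition part_stab n (P : {set {set 'I_n}}) : {set {perm 'I_n}} :=
  [set s : {perm 'I_n} | [forall B in P, (s @: B) \in P]].

Definition set_stab n (A : {set 'I_n}) : {set {perm 'I_n}} :=
  [set s : {perm 'I_n} | s @: A == A].

Definition uniform_partition n (P : {set {set 'I_n}}) (k l : nat) : Prop :=
  [/\ partition P [set: 'I_n], #|P| = l & forall B, B \in P -> #|B| = k].

Definition inHfam n (H : {set {perm 'I_n}}) : Prop :=
  (exists P, uniform_partition P (n %/ 2) 2 /\ H = part_stab P)
  \/ H = ('Alt_('I_n))%g
  \/ (exists i (A : {set 'I_n}), [/\ 1 <= i, i <= n %/ 3 - 1, #|A| = i & H = set_stab A]).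

From mathcomp Require Import all_boot all_fingroup all_solvable zify.
Set Implicit Arguments. Unset Strict Implicit. Unset Printing Implicit Defensive.

(* If M stabilises a partition into l >= 3 blocks of
   size k, then |M| <= l! (k!)^l, and an elementary estimate of this wreath
   product order gives |M| 3^n <= 10 n n!.  Every H of the family contains an
   element x of Pi; as Pi is a union of cycle types, the H-class of x lies in
   H :&: Pi, and since the centraliser of x in S_n has order at most n^r (r the
   number of cycles of x) we get |H :&: Pi| >= |H| / n^r.  Finally |H| >= n!/d
   with d = 'C(n, n/2), 2 or 'C(n, i), and 10 n d n^r < 3^n in each case. *)

Lemma fact_mul_expS_le k l j :
  j <= k -> (k * l)`! * j`! * l.+1 ^ j <= (k * l + j)`!.
Proof.
elim: j => [|j IH] ltjk; first by rewrite fact0 expn0 !muln1 addn0.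
rewrite addnS factS factS expnS.
have step : j.+1 * l.+1 <= (k * l + j).+1 by nia.
apply: leq_trans (leq_mul step (IH (ltnW ltjk))); apply: eq_leq; lia.
Qed.

Lemma mul_exp3_le_expS k l : 4 <= k -> 3 <= l -> l * 3 ^ k <= l.+1 ^ k.
Proof.
move=> k4 l3; elim: k k4 => [//|k IH]; rewrite leq_eqVlt => /orP[/eqP k3|k4].
  by rewrite -k3; nia.
rewrite !expnS mulnCA (leq_trans (leq_mul (leqnn 3) (IH k4))) //.
by rewrite leq_mul2r; lia.
Qed.

Lemma fact_block_step_le k l :
  2 <= k -> 3 <= l -> l * k`! * 3 ^ k * (k * l)`! <= (k * l + k)`!.
Proof.
move=> k2 l3; have [k4|] := leqP 4 k.
  apply: leq_trans (fact_mul_expS_le l (leqnn k)).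
  apply: leq_trans (leq_mul (leqnn ((k * l)`! * k`!)) (mul_exp3_le_expS k4 l3)).
  apply: eq_leq; lia.
move=> k4; have [->|->] : k = 2 \/ k = 3 by lia.
  rewrite (_ : 2 * l + 2 = (2 * l).+2) ?factS; last lia.
  have : l * 2 * 9 <= (2 * l).+2 * (2 * l).+1 by nia.
  by move/(leq_mul (leqnn (2 * l)`!)); rewrite fact0; lia.
rewrite (_ : 3 * l + 3 = (3 * l).+3) ?factS; last lia.
have : l * 6 * 27 <= (3 * l).+3 * (3 * l).+2 * (3 * l).+1 by nia.
by move/(leq_mul (leqnn (3 * l)`!)); rewrite fact0; lia.
Qed.

Lemma fact_cube_exp27_le k : 0 < k -> k`! ^ 3 * 27 ^ k <= 5 * k * (3 * k)`!.
Proof.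
elim: k => [//|[|k] IH] _; first by [].
have IHk := IH isT; set m := k.+1 in IHk *.
have step : m.+1 ^ 3 * 27 * (5 * m) <= 5 * m.+1 * ((3 * m).+3 * (3 * m).+2 * (3 * m).+1).
  by nia.
apply: (@leq_trans (m.+1 ^ 3 * 27 * (m`! ^ 3 * 27 ^ m))).
  by rewrite [m.+1`!]factS expnMn [27 ^ m.+1]expnS; apply: eq_leq; lia.
apply: leq_trans (leq_mul (leqnn _) IHk) _.
apply: (@leq_trans (5 * m.+1 * ((3 * m).+3 * (3 * m).+2 * (3 * m).+1) * (3 * m)`!)).
  by apply: leq_trans _ (leq_mul step (leqnn (3 * m)`!)); apply: eq_leq; lia.
rewrite (_ : 3 * m.+1 = (3 * m).+3) ?factS; last lia.
by apply: eq_leq; lia.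
Qed.

Lemma wreath_exp3_le k l :
  2 <= k -> 3 <= l -> l`! * k`! ^ l * 3 ^ (k * l) <= 10 * (k * l) * (k * l)`!.
Proof.
move=> k2; elim: l => [//|l IH]; rewrite leq_eqVlt => /orP[/eqP l3|l3].
  have := fact_cube_exp27_le (ltnW k2); rewrite -l3 (mulnC k 3) expnM.
  by rewrite (_ : 3`! = 6) // (_ : 3 ^ 3 = 27) //; lia.
rewrite (_ : k * l.+1 = k * l + k); last lia.
apply: (@leq_trans (l.+1 * k`! * 3 ^ k * (l`! * k`! ^ l * 3 ^ (k * l)))).
  by rewrite factS expnS expnD; apply: eq_leq; lia.
apply: leq_trans (leq_mul (leqnn _) (IH l3)) _.
apply: (@leq_trans (10 * k * l.+1 * (l * k`! * 3 ^ k * (k * l)`!))).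
  by apply: eq_leq; lia.
by apply: leq_trans (leq_mul (leqnn _) (fact_block_step_le k2 l3)) _; apply: eq_leq; lia.
Qed.

Lemma exp3_gt_sq_exp2 n : 36 <= n -> 10 * n ^ 2 * 2 ^ n < 3 ^ n.
Proof.
elim: n => [//|n IH]; rewrite leq_eqVlt => /orP[/eqP<- {IH}|n36]; first lia.
have step : 10 * n.+1 ^ 2 * 2 <= 3 * (10 * n ^ 2) by nia.
rewrite [2 ^ n.+1]expnS [3 ^ n.+1]expnS mulnA.
by apply: leq_ltn_trans (leq_mul step (leqnn _)) _; rewrite -mulnA ltn_pmul2l ?IH.
Qed.

Lemma exp2_gt_pow4 j : 25 <= j -> 810 * j ^ 4 < 16 * 2 ^ j.
Proof.
elim: j => [//|j IH]; rewrite leq_eqVlt => /orP[/eqP<- {IH}|j25]; first lia.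
have step : 810 * j.+1 ^ 4 <= 2 * (810 * j ^ 4) by nia.
by rewrite [2 ^ _]expnS mulnCA; apply: leq_ltn_trans step _; rewrite ltn_pmul2l ?IH.
Qed.

Lemma bin_mul_exp_le n i a b : 'C(n, i) * (a ^ (n - i) * b ^ i) <= (a + b) ^ n.
Proof.
have [lein|/bin_small->] := leqP i n; last by [].
by rewrite expnDn (bigD1 (Ordinal (_ : i < n.+1))) //= leq_addr.
Qed.

Lemma exp3_gt_two_cycles n : 36 <= n -> 10 * n * 2 * n ^ 2 < 3 ^ n.
Proof.
move=> n36; apply: leq_ltn_trans _ (exp3_gt_sq_exp2 n36).
rewrite (_ : 10 * n * 2 * n ^ 2 = 10 * n ^ 2 * (2 * n)); last lia.
rewrite leq_mul2l; apply/orP; right.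
by elim: (n) => // m IH; rewrite expnS; have := expn_gt0 2 m; lia.
Qed.

Lemma exp3_gt_ncycle n : 36 <= n -> 10 * n * 'C(n, n %/ 2) * n ^ 1 < 3 ^ n.
Proof.
move=> n36; apply: leq_ltn_trans _ (exp3_gt_sq_exp2 n36).
have := bin_mul_exp_le n (n %/ 2) 1 1; rewrite !exp1n !muln1 => bin_le.
rewrite (_ : 10 * n * _ * n ^ 1 = 10 * n ^ 2 * 'C(n, n %/ 2)); last lia.
by rewrite leq_mul2l bin_le orbT.
Qed.

Lemma exp3_gt_three_cycles n i : 36 <= n -> 3 * i + 3 <= n ->
  10 * n * 'C(n, i) * n ^ 3 < 3 ^ n.
Proof.
move=> n36 ni; set j := n - i.
have n4 : 10 * n ^ 4 < 2 ^ j.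
  have n_j : (2 * n) ^ 4 <= (3 * j) ^ 4 by rewrite leq_exp2r //; lia.
  rewrite -(ltn_pmul2l (_ : 0 < 16)) //; apply: leq_ltn_trans (exp2_gt_pow4 _); last lia.
  by move: n_j; rewrite !expnMn; lia.
apply: leq_trans (bin_mul_exp_le n i 2 1); rewrite exp1n muln1.
rewrite (_ : 10 * n * 'C(n, i) * n ^ 3 = 'C(n, i) * (10 * n ^ 4)); last first.
  by rewrite [n ^ 4]expnS; lia.
by rewrite ltn_pmul2l // bin_gt0; lia.
Qed.

Local Open Scope group_scope.

Section PorbitSizes.
Variable T : finType.
Implicit Types (s g : {perm T}).

Definition porbit_sizes s : seq nat := [seq #|(X : {set T})| | X <- enum (porbits s)].

Lemma size_porbit_sizes s : size (porbit_sizes s) = #|porbits s|.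
Proof. by rewrite size_map cardE. Qed.

Lemma porbitJ s g y : porbit (s ^ g) (g y) = g @: porbit s y.
Proof.
apply/setP => z; apply/porbitP/imsetP => [[i ->]|[_ /porbitP[i ->] ->]].
  by exists ((s ^+ i) y); rewrite ?mem_porbit // -conjXg conjgE !permM permK.
by exists i; rewrite -conjXg conjgE !permM permK.
Qed.

Lemma porbitsJ s g : porbits (s ^ g) = [set g @: X | X : {set T} in porbits s].
Proof.
apply/setP => X; apply/imsetP/imsetP => [[y _ ->]|[_ /imsetP[y _ ->] ->]].
  by exists (porbit s (g^-1 y)); rewrite ?imset_f // -porbitJ permKV.
by exists (g y); rewrite ?porbitJ.
Qed.

Lemma porbit_sizesJ s g : perm_eq (porbit_sizes (s ^ g)) (porbit_sizes s).
Proof.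
have injg : injective (fun X : {set T} => g @: X) by apply/imset_inj/perm_inj.
have enumJ : perm_eq (enum (porbits (s ^ g))) [seq g @: X | X : {set T} <- enum (porbits s)].
  apply: uniq_perm; rewrite ?enum_uniq ?(map_inj_uniq injg) ?enum_uniq // => X.
  rewrite (mem_enum (porbits _)) porbitsJ.
  by apply/imsetP/mapP => -[Y PY ->]; exists Y; rewrite // ?mem_enum // -mem_enum.
rewrite /porbit_sizes; apply: perm_trans (perm_map _ enumJ) _.
rewrite -map_comp (@eq_map _ _ _ (fun X : {set T} => #|X|)) => [|X]; first exact: perm_refl.
by rewrite /= card_imset //; apply: perm_inj.
Qed.

End PorbitSizes.

Section Centralizer.
Variable T : finType.
Implicit Types (x g h : {perm T}).

Lemma cent1_perm_eq_on_porbit x g h y :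
  g \in 'C[x] -> h \in 'C[x] -> g y = h y -> {in porbit x y, g =1 h}.
Proof.
move=> /cent1P cxg /cent1P cxh gh _ /porbitP[i ->].
by rewrite -!permM -(commuteX i cxg) -(commuteX i cxh) !permM gh.
Qed.

(* An element of 'C[x] is determined by its values at one point of each cycle. *)
Lemma card_cent1_perm_le x : #|'C[x]| <= #|T| ^ #|porbits x|.
Proof.
case: (pickP (@predT T)) => [y0 _ | T0]; last first.
  rewrite (_ : porbits x = set0) ?cards0 ?expn0; last first.
    by apply/setP => X; rewrite inE; apply/imsetP => -[y]; have := T0 y.
  rewrite -(cards1 (1 : {perm T})) subset_leq_card //; apply/subsetP => g _.
  by rewrite inE; apply/eqP/permP => y; have := T0 y.
pose rep (X : {set T}) := odflt y0 [pick y in X].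
have repP y : rep (porbit x y) \in porbit x y.
  by rewrite /rep; case: pickP => [z -> //|/(_ y)]; rewrite porbit_id.
pose F g := [ffun X : {X | X \in porbits x} => g (rep (val X))].
have injF : {in 'C[x] &, injective F}.
  move=> g h cxg cxh /ffunP eqF; apply/permP => y.
  have Xy : porbit x y \in porbits x by apply: imset_f.
  have := eqF (exist _ (porbit x y) Xy); rewrite !ffunE /=.
  by move/(cent1_perm_eq_on_porbit cxg cxh); apply; rewrite porbit_sym.
rewrite -(card_in_imset injF) (leq_trans (max_card _)) //.
by rewrite card_ffun card_sig.
Qed.

Lemma card_le_class_mul (G : {group {perm T}}) x :
  #|G| <= #|x ^: G| * #|T| ^ #|porbits x|.
Proof.
rewrite -(Lagrange (subsetIl G 'C[x])) index_cent1 mulnC leq_mul2l.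
by rewrite (leq_trans (subset_leq_card (subsetIr _ _)) (card_cent1_perm_le x)) orbT.
Qed.

End Centralizer.

Lemma card_acts_le (aT : finGroupType) (D : {group aT}) (rT : finType)
    (to : action D rT) (A : {group aT}) (S : {set rT}) :
  [acts A, on S | to] -> #|A| <= #|S|`! * #|'C_A(S | to)|.
Proof.
move=> nSA; set f := actperm <[nSA]>.
have -> : 'C_A(S | to) = 'ker f by rewrite ker_actperm astab_actby setIT.
have imf : f @* A \subset perm_on S.
  apply/subsetP => _ /morphimP[a _ _ ->]; apply/subsetP => x; apply: contraR => Sx.
  by rewrite actpermE /= /actby (negPf Sx).
rewrite -{1}(Lagrange (subsetIl A _ : 'ker f \subset A)) mulnC leq_mul2r.
rewrite -card_perm; apply/orP; right; apply: leq_trans (subset_leq_card imf).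
by rewrite card_morphim setIid.
Qed.

Section Stabilizers.
Variable T : finType.

Lemma card_astab_blocks_le (Q : {set {set T}}) (G : {group {perm T}}) :
    G \subset 'C(Q | ('P)^*) -> G \subset 'C(~: cover Q | 'P) ->
  #|G| <= \prod_(B in Q) #|B|`!.
Proof.
have [m] := ubnP #|Q|; elim: m Q G => // m IH Q G ltQm cQG cQc.
have [Q0|[B QB]] := set_0Vmem Q.
  subst Q; rewrite big_set0 -(cards1 (1 : {perm T})) subset_leq_card //.
  apply/subsetP => g Gg; rewrite inE; apply/eqP/permP => x.
  have /astabP gx := subsetP cQc g Gg.
  by rewrite perm1 -[RHS](gx x) // /cover big_set0 !inE.
have nBG : G \subset 'N(B | 'P).
  by rewrite -astab1_set (subset_trans cQG) // astabS ?sub1set.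
rewrite (big_setD1 B) //= (leq_trans (card_acts_le nBG)) // leq_mul2l.
apply/orP; right; apply: IH.
- by rewrite -ltnS (leq_trans _ ltQm) // (cardsD1 B Q) QB.
- by rewrite subIset // (subset_trans cQG) // astabS // subD1set.
apply: subset_trans (setSI _ cQc) _; rewrite -astabU astabS //.
apply/subsetP => x; rewrite /cover (big_setD1 B QB) /= !inE.
by case: (x \in B) => //= ->.
Qed.

Lemma card_part_stab_le (P : {set {set T}}) k :
    partition P [set: T] -> (forall B, B \in P -> #|B| = k) ->
  #|'N(P | ('P)^*)| <= #|P|`! * k`! ^ #|P|.
Proof.
move=> partP cardP; rewrite (leq_trans (card_acts_le (subxx _))) // leq_mul2l.
apply/orP; right; rewrite -prod_nat_const.
rewrite (eq_bigr (fun B : {set T} => #|B|`!)) => [|B /cardP -> //].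
apply: card_astab_blocks_le; first exact: subsetIr.
rewrite (cover_partition partP) setCT; apply/subsetP => g _.
by apply/astabP => x; rewrite inE.
Qed.

Lemma card_set_stab_ge (A : {set T}) :
  #|T|`! <= #|'C[A | ('P)^*]| * 'C(#|T|, #|A|).
Proof.
have cardT : #|[set: {perm T}]| = #|T|`!.
  rewrite -cardsT -card_perm; apply: eq_card => s; rewrite inE.
  by apply/esym/subsetP => x; rewrite inE.
have := card_orbit_stab ('P)^* [set: {perm T}] A.
rewrite setTI cardT => <-; rewrite mulnC leq_mul2l -card_draws; apply/orP; right.
apply/subset_leq_card/subsetP => _ /orbitP[s _ <-].
by rewrite inE /= card_imset //; apply: perm_inj.
Qed.

End Stabilizers.

Section CyclesPerm.
Variables (T : finType) (cs : seq (seq T)).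
Hypotheses (cs_uniq : uniq (flatten cs)) (cs_cover : forall y, y \in flatten cs).

Lemma cycles_mem_eq c1 c2 y : c1 \in cs -> c2 \in cs -> y \in c1 -> y \in c2 -> c1 = c2.
Proof.
elim: cs cs_uniq => [//|c cs' IH] /=; rewrite cat_uniq => /and3P[_ dis uniq'].
have no_y c' : y \in c -> c' \in cs' -> y \in c' -> False.
  by move=> yc cs'c' yc'; case/hasP: dis; exists y => //; apply/flattenP; exists c'.
rewrite !inE => /predU1P[->|cs'1] /predU1P[->|cs'2] y1 y2 //; last exact: IH.
- by case: (no_y c2).
- by case: (no_y c1).
Qed.

Lemma uniq_cycles c : c \in cs -> uniq c.
Proof.
elim: cs cs_uniq => [//|c' cs' IH] /=; rewrite cat_uniq => /and3P[uc _ uniq'].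
by rewrite inE => /predU1P[->|] //; apply: IH.
Qed.

Lemma uniq_cycle_seq : [::] \notin cs -> uniq cs.
Proof.
elim: cs cs_uniq => [//|c cs' IH] /=; rewrite cat_uniq inE negb_or.
move=> /and3P[_ dis uniq'] /andP[c_nil cs'_nil]; rewrite IH // andbT.
case: c c_nil dis => [//|y c] _ dis; apply: contra dis => cs'_c.
apply/hasP; exists y; rewrite ?mem_head //.
by apply/flattenP; exists (y :: c); rewrite ?mem_head.
Qed.

Definition cycle_of y := nth [::] cs (find (fun c => y \in c) cs).

Lemma cycle_ofP y : cycle_of y \in cs /\ y \in cycle_of y.
Proof.
have has_y : has (fun c => y \in c) cs.
  by apply/hasP; case/flattenP: (cs_cover y) => c; exists c.
by split; [rewrite mem_nth // -has_find | exact: (nth_find [::] has_y)].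
Qed.

Lemma cycle_of_eq c y : c \in cs -> y \in c -> cycle_of y = c.
Proof.
by move=> cs_c c_y; case: (cycle_ofP y) => cs_cy cy_y; apply: cycles_mem_eq cy_y c_y.
Qed.

Lemma cycles_fun_inj : injective (fun y => next (cycle_of y) y).
Proof.
move=> y1 y2 /= eq_next; have [cs_c1 c1_y1] := cycle_ofP y1.
have [cs_c2 c2_y2] := cycle_ofP y2.
have eq_c : cycle_of y1 = cycle_of y2.
  apply: (@cycles_mem_eq _ _ (next (cycle_of y1) y1)) => //.
    by rewrite mem_next.
  by rewrite eq_next mem_next.
rewrite -(prev_next (uniq_cycles cs_c1) y1) eq_next eq_c.
exact: prev_next (uniq_cycles cs_c2) y2.
Qed.

Definition cycles_perm : {perm T} := perm cycles_fun_inj.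

Lemma cycles_permE c y : c \in cs -> y \in c -> cycles_perm y = next c y.
Proof. by move=> cs_c c_y; rewrite permE /= (cycle_of_eq cs_c c_y). Qed.

Lemma porbit_cycles_perm c y : c \in cs -> y \in c -> porbit cycles_perm y = [set z in c].
Proof.
move=> cs_c c_y; have fcyc : fcycle cycles_perm c.
  by apply: (cycle_from_next (uniq_cycles cs_c)) => z c_z; rewrite /= (cycles_permE cs_c).
apply/setP => z; rewrite inE -(fconnect_cycle fcyc c_y).
apply/porbitP/idP => [[i ->]|/iter_findex <-]; first by rewrite permX fconnect_iter.
by exists (findex cycles_perm y z); rewrite permX.
Qed.

Lemma cycles_perm_stable c : c \in cs -> cycles_perm @: [set z in c] = [set z in c].
Proof.
move=> cs_c; apply/eqP; rewrite eqEcard card_imset ?leqnn ?andbT; last exact: perm_inj.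
apply/subsetP => _ /imsetP[z c_z ->]; rewrite inE in c_z.
by rewrite inE (cycles_permE cs_c c_z) mem_next.
Qed.

Lemma porbit_sizes_cycles_perm : [::] \notin cs ->
  perm_eq (porbit_sizes cycles_perm) (map size cs).
Proof.
move=> cs_nil; pose setc (c : seq T) := [set z in c].
have setc_inj : {in cs &, injective setc}.
  move=> c1 c2 cs_c1 cs_c2 eq_set; case: c1 cs_c1 eq_set => [|y c1] cs_c1 eq_set.
    by rewrite cs_c1 in cs_nil.
  apply: (@cycles_mem_eq _ _ y); rewrite ?mem_head //.
  have : y \in setc c2 by rewrite -eq_set inE mem_head.
  by rewrite inE.
have enumE : perm_eq (enum (porbits cycles_perm)) (map setc cs).
  apply: uniq_perm; rewrite ?enum_uniq ?map_inj_in_uniq ?uniq_cycle_seq //.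
  move=> X; rewrite mem_enum; apply/imsetP/mapP => [[y _ ->]|[[|y c] cs_c ->]].
  - have [cs_c c_y] := cycle_ofP y.
    by exists (cycle_of y); rewrite ?(porbit_cycles_perm cs_c c_y).
  - by rewrite cs_c in cs_nil.
  - by exists y; rewrite ?(porbit_cycles_perm cs_c) ?mem_head.
rewrite /porbit_sizes; apply: perm_trans (perm_map _ enumE) _.
rewrite -map_comp (_ : map _ cs = map size cs) ?perm_refl //.
by apply/eq_in_map => c cs_c /=; rewrite cardsE; apply/card_uniqP/uniq_cycles.
Qed.

End CyclesPerm.

Section PrescribedCycles.
Variable T : finType.

Lemma exists_perm_cycles (cs : seq (seq T)) :
    uniq (flatten cs) -> (forall y, y \in flatten cs) -> [::] \notin cs ->
  exists2 s : {perm T}, perm_eq (porbit_sizes s) (map size cs)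
    & {in cs, forall c, s @: [set z in c] = [set z in c]}.
Proof.
move=> cs_uniq cs_cover cs_nil; exists (cycles_perm cs_uniq cs_cover).
  exact: porbit_sizes_cycles_perm.
exact: cycles_perm_stable.
Qed.

Lemma exists_perm_two_cycles a b : 0 < a -> 0 < b -> a + b = #|T| ->
  exists s : {perm T}, perm_eq (porbit_sizes s) [:: a; b].
Proof.
move=> a0 b0 abT; have size_e : size (enum T) = a + b by rewrite -cardT.
have [|||s sizes_s _] := @exists_perm_cycles [:: take a (enum T); drop a (enum T)].
- by rewrite /= cats0 cat_take_drop enum_uniq.
- by move=> y; rewrite /= cats0 cat_take_drop mem_enum.
- rewrite !inE !negb_or ![[::] == _]eq_sym -!size_eq0 size_drop size_takel size_e.
    by rewrite addKn -!lt0n a0 b0.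
  exact: leq_addr.
by exists s; rewrite /= size_takel ?size_drop size_e ?addKn // leq_addr in sizes_s.
Qed.

Lemma exists_perm_stab_three_cycles (A : {set T}) a b :
    0 < #|A| -> 0 < a -> 0 < b -> #|A| + a + b = #|T| ->
  exists2 s : {perm T}, s @: A = A & perm_eq (porbit_sizes s) [:: #|A|; a; b].
Proof.
move=> A0 a0 b0 abT; set e := enum (~: A).
have size_e : size e = a + b by rewrite -cardE; move: (cardsC A); lia.
have [|||s sizes_s stab_s] := @exists_perm_cycles [:: enum A; take a e; drop a e].
- rewrite /= cats0 cat_take_drop cat_uniq !enum_uniq andbT /=.
  by apply/hasPn => y; rewrite /e !mem_enum inE.
- by move=> y; rewrite /= cats0 cat_take_drop /e mem_cat !mem_enum inE orbN.
- rewrite !inE !negb_or ![[::] == _]eq_sym -!size_eq0 size_drop size_takel size_e ?leq_addr //.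
  by rewrite addKn -cardE -!lt0n A0 a0 b0.
exists s; first by rewrite -[A]set_enum stab_s ?mem_head.
by rewrite /= size_takel ?size_drop size_e ?addKn ?leq_addr // -cardE in sizes_s.
Qed.

Lemma next_nth_succ (c : seq T) x0 i :
  uniq c -> i.+1 < size c -> next c (nth x0 c i) = nth x0 c i.+1.
Proof.
move=> uc lti; rewrite next_nth mem_nth 1?ltnW //; case: c uc lti => [//|y c] uc lti.
by rewrite index_uniq 1?ltnW //=; apply: set_nth_default.
Qed.

Lemma exists_alternating_enum (B : {set T}) : 0 < #|B| -> #|B| + #|B| = #|T| ->
  exists c : seq T, [/\ uniq c, forall y, y \in c, size c = #|T|
    & forall x0 i, i < size c -> (nth x0 c i \in B) = ~~ odd i].
Proof.
move=> B0 BBT; set m := #|B|; have [y0 By0] := card_gt0P B0.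
have size_enumC : size (enum (~: B)) = m by rewrite -cardE; move: (cardsC B); lia.
pose enum_at (b : bool) := if b then enum (~: B) else enum B.
have size_enum_at b : size (enum_at b) = m by case: b; rewrite /= ?size_enumC -?cardE.
(* Position p holds item p./2 of enum B if p is even, of enum (~: B) if p is odd;
   g is the inverse of f. *)
pose f p := nth y0 (enum_at (odd p)) p./2.
pose g y := (y \notin B) + (index y (enum_at (y \notin B))).*2.
have f_B p : p < m + m -> (f p \in B) = ~~ odd p.
  move=> ltp; have : f p \in enum_at (odd p) by rewrite mem_nth ?size_enum_at //; lia.
  by case: (odd p); rewrite /= mem_enum ?inE // => /negPf.
have fK p : p < m + m -> g (f p) = p.
  move=> ltp; rewrite /g f_B // negbK index_uniq ?size_enum_at.
  - exact: odd_double_half.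
  - by have := odd_double_half p; lia.
  - by case: (odd p); apply: enum_uniq.
have g_lt y : g y < m + m.
  have : index y (enum_at (y \notin B)) < m.
    rewrite -(size_enum_at (y \notin B)) index_mem.
    by case: (boolP (y \in B)) => yB; rewrite /enum_at /= mem_enum ?inE.
  by rewrite /g; case: (y \notin B); lia.
have gK y : f (g y) = y.
  rewrite /f /g oddD odd_double half_bit_double addbF oddb nth_index //.
  by case: (boolP (y \in B)) => yB; rewrite /enum_at /= mem_enum ?inE.
exists (mkseq f (m + m)); split; rewrite ?size_mkseq -?BBT //.
- rewrite map_inj_in_uniq ?iota_uniq // => p q; rewrite !mem_iota /= => ltp ltq eq_f.
  by rewrite -(fK p ltp) eq_f fK.
- by move=> y; apply/mapP; exists (g y); rewrite ?gK // mem_iota g_lt.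
by move=> x0 p ltp; rewrite nth_mkseq ?f_B.
Qed.

Lemma exists_ncycle_swap (B : {set T}) : 0 < #|B| -> #|B| + #|B| = #|T| ->
  exists2 s : {perm T}, s @: B = ~: B & perm_eq (porbit_sizes s) [:: #|T|].
Proof.
move=> B0 BBT; have [c [uniq_c c_cover size_c c_B]] := exists_alternating_enum B0 BBT.
have uniq_cs : uniq (flatten [:: c]) by rewrite /= cats0.
have cover_cs y : y \in flatten [:: c] by rewrite /= cats0.
exists (cycles_perm uniq_cs cover_cs); last first.
  rewrite (perm_trans (porbit_sizes_cycles_perm _ _ _)) //= ?size_c //.
  by rewrite inE eq_sym -size_eq0 size_c; lia.
apply/eqP; rewrite eqEcard card_imset; last exact: perm_inj.
rewrite (_ : #|~: B| <= #|B|) ?andbT; last by move: (cardsC B); lia.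
apply/subsetP => _ /imsetP[y By ->]; set i := index y c.
have lt_i : i < size c by rewrite index_mem.
have even_i : ~~ odd i by rewrite -(c_B y) ?nth_index.
have ltS_i : i.+1 < size c.
  by move: lt_i; rewrite size_c -BBT -(odd_double_half i) (negPf even_i); lia.
rewrite -{1}(nth_index y (c_cover y)) (cycles_permE _ _ (mem_head c [::])) ?mem_nth //.
by rewrite next_nth_succ // inE c_B //= negbK.
Qed.
End PrescribedCycles.

Lemma perm_imsetC (T : finType) (s : {perm T}) (A : {set T}) : s @: (~: A) = ~: (s @: A).
Proof.
apply/setP => z; rewrite inE -{1 2}(permKV s z) !mem_imset ?inE //; exact: perm_inj.
Qed.

Lemma partition2E (T : finType) (P : {set {set T}}) B :
  partition P [set: T] -> #|P| = 2 -> B \in P -> P = [set B; ~: B].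
Proof.
case/and3P => /eqP coverP trivP _ P2 PB.
have [B' /setD1P[neqB' PB']] : exists B', B' \in P :\ B.
  by apply/card_gt0P; move: P2; rewrite (cardsD1 B) PB; case: #|_|.
have PE : P = [set B; B'].
  apply/esym/eqP; rewrite eqEcard cards2 eq_sym neqB' P2 leqnn andbT.
  by apply/subsetP => X; rewrite !inE => /orP[] /eqP->.
have disjB : [disjoint B & B'] by apply: (trivIsetP trivP); rewrite // eq_sym.
rewrite PE; congr [set B; _]; apply/setP => x; rewrite inE.
apply/idP/idP => [/(disjointFl disjB)->//|nBx].
have : x \in cover P by rewrite coverP inE.
by case/bigcupP => X; rewrite PE !inE => /orP[] /eqP-> //; rewrite (negPf nBx).
Qed.

Section OnOrdinals.
Variable n : nat.
Implicit Types (x g : {perm 'I_n}) (G : {group {perm 'I_n}}).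

Lemma part_stabE (P : {set {set 'I_n}}) : part_stab P = 'N(P | ('P)^*).
Proof.
apply/setP => g; rewrite !inE /=.
by apply/forall_inP/subsetP => stabP B /stabP; rewrite inE.
Qed.

Lemma set_stabE (A : {set 'I_n}) : set_stab A = 'C[A | ('P)^*].
Proof. by apply/setP => g; rewrite !inE /= sub1set inE. Qed.

(* [cycle_lengths] is [porbit_sizes] on ['I_n]: [has_cycle_type s c] and
   [perm_eq (porbit_sizes s) c] are convertible, and are used interchangeably. *)
Lemma has_cycle_typeJ x g c : has_cycle_type (x ^ g) c = has_cycle_type x c.
Proof. exact: (permPl (porbit_sizesJ x g)). Qed.

Lemma Pi_conj x g : (x ^ g \in Pi n) = (x \in Pi n).
Proof.
rewrite !inE /inPi !has_cycle_typeJ.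
by congr [|| _, _, _, _, _, _, _ | _]; apply: eq_existsb => i; rewrite has_cycle_typeJ.
Qed.

Lemma card_le_Pi_class G x :
  x \in G -> x \in Pi n -> #|G| <= #|G :&: Pi n| * n ^ #|porbits x|.
Proof.
move=> Gx Pix; have := card_le_class_mul G x; rewrite card_ord => /leq_trans; apply.
rewrite leq_mul2r subset_leq_card ?orbT //; apply/subsetP => _ /imsetP[g Gg ->].
by rewrite inE groupJ ?Pi_conj.
Qed.

Lemma card_Pi_gt G x a d :
    x \in G -> x \in Pi n -> a * 3 ^ n <= 10 * n * n`! -> n`! <= d * #|G| ->
    10 * n * d * n ^ #|porbits x| < 3 ^ n ->
  a < #|G :&: Pi n|.
Proof.
move=> Gx Pix le_a le_fact lt_exp3.
have Pi_pos : 0 < #|G :&: Pi n| by apply/card_gt0P; exists x; rewrite inE Gx.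
rewrite -(ltn_pmul2r (expn_gt0 3 n)) (leq_ltn_trans le_a) //.
apply: (@leq_ltn_trans (10 * n * d * n ^ #|porbits x| * #|G :&: Pi n|)).
  have := leq_trans le_fact (leq_mul (leqnn d) (card_le_Pi_class Gx Pix)).
  by move/(leq_mul (leqnn (10 * n)))/leq_trans; apply; apply: eq_leq; lia.
by rewrite mulnC ltn_pmul2l.
Qed.
End OnOrdinals.

Local Close Scope group_scope.

Lemma part_stab_Pi_le n (P : {set {set 'I_n}}) k l :
    2 <= k -> 3 <= l -> k * l = n -> uniform_partition P k l ->
  #|part_stab P :&: Pi n| * 3 ^ n <= 10 * n * n`!.
Proof.
move=> k2 l3 kl [partP cardP sizeP]; have := wreath_exp3_le k2 l3.
rewrite kl; apply: leq_trans; rewrite leq_mul2r; apply/orP; right.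
rewrite part_stabE -cardP (leq_trans (subset_leq_card (subsetIl _ _))) //.
exact: card_part_stab_le partP sizeP.
Qed.

Section LargeEven.
Variable n : nat.
Hypotheses (n36 : 36 <= n) (n_even : ~~ odd n).

Lemma Pi_two_cycles : exists a b, [/\ 0 < a, 0 < b, a + b = n &
  forall x : {perm 'I_n}, has_cycle_type x [:: a; b] -> x \in Pi n].
Proof.
case odd_half: (odd (n %/ 2)).
  exists (n %/ 2 - 2), (n %/ 2 + 2); split; try lia.
  by move=> x x_type; rewrite inE /inPi odd_half x_type !orbT.
exists (n %/ 2 - 1), (n %/ 2 + 1); split; try lia.
by move=> x x_type; rewrite inE /inPi odd_half x_type !orbT.
Qed.

Lemma Pi_three_cycles i : 1 <= i <= n %/ 3 - 1 -> exists a b, [/\ 0 < a, 0 < b, i + a + b = n &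
  forall x : {perm 'I_n}, has_cycle_type x [:: i; a; b] -> x \in Pi n].
Proof.
case/andP=> i1 i_le; have lt_in : i < n by lia.
have [->|i_neq1] := eqVneq i 1.
  exists (n %/ 2 - 2), (n %/ 2 + 1); split; try lia.
  by move=> x x_type; rewrite inE /inPi x_type !orbT.
case odd_i: (odd i).
  exists ((n - i - 1) %/ 2), ((n - i + 1) %/ 2); split; try lia.
  move=> x x_type; rewrite inE /inPi; do 4 (apply/orP; right); apply/orP; left.
  by apply/existsP; exists (Ordinal lt_in); rewrite /= odd_i x_type andbT; lia.
case odd_rest: (odd ((n - i) %/ 2)).
  exists ((n - i) %/ 2), ((n - i) %/ 2); split; try lia.
  move=> x x_type; rewrite inE /inPi; do 5 (apply/orP; right); apply/orP; left.
  by apply/existsP; exists (Ordinal lt_in); rewrite /= odd_i odd_rest x_type andbT; lia.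
have [i2|i_neq2] := eqVneq i 2.
  subst i; exists (n %/ 2 - 4), (n %/ 2 + 2); split; try lia.
  by move=> x x_type; rewrite inE /inPi odd_rest x_type !orbT.
exists ((n - i) %/ 2 - 1), ((n - i) %/ 2 + 1); split; try lia.
move=> x x_type; rewrite inE /inPi; do 6 (apply/orP; right); apply/orP; left.
by apply/existsP; exists (Ordinal lt_in); rewrite /= odd_i odd_rest x_type andbT; lia.
Qed.

Lemma halves_Pi_gt (P : {set {set 'I_n}}) a :
  uniform_partition P (n %/ 2) 2 -> a * 3 ^ n <= 10 * n * n`! -> a < #|part_stab P :&: Pi n|.
Proof.
case=> partP cardP sizeP le_a; have [B PB] : exists B, B \in P.
  by apply/card_gt0P; rewrite cardP.
have cardB : #|B| = n %/ 2 by apply: sizeP.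
have PE := partition2E partP cardP PB.
have stabP (g : {perm 'I_n}) : g @: B \in [set B; ~: B] -> g \in part_stab P.
  rewrite PE !inE => gB; apply/forall_inP => X; rewrite !inE => /orP[] /eqP->.
    by [].
  by rewrite perm_imsetC; case/orP: gB => /eqP->; rewrite ?setCK eqxx ?orbT.
have [x xB x_type] : exists2 x : {perm 'I_n}, x @: B = ~: B & has_cycle_type x [:: #|'I_n|].
  by apply: exists_ncycle_swap; rewrite cardB ?card_ord; lia.
rewrite part_stabE in stabP *.
apply: (card_Pi_gt (x := x) (d := 'C(n, n %/ 2))) le_a _ _.
- by apply: stabP; rewrite xB !inE eqxx orbT.
- by rewrite inE /inPi (_ : has_cycle_type x [:: n]) // -{2}(card_ord n).
- have := card_set_stab_ge B; rewrite card_ord cardB mulnC => /leq_trans; apply.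
  rewrite leq_mul2l subset_leq_card ?orbT //; apply/subsetP => g /astab1P gB.
  by apply: stabP; have -> : g @: B = B := gB; rewrite !inE eqxx.
- by rewrite -size_porbit_sizes (perm_size x_type) card_ord exp3_gt_ncycle.
Qed.

Lemma Alt_Pi_gt a : a * 3 ^ n <= 10 * n * n`! -> a < #|('Alt_('I_n))%g :&: Pi n|.
Proof.
move=> le_a; have [b [c [b0 c0 bc Pi_bc]]] := Pi_two_cycles.
have [x x_type] := @exists_perm_two_cycles 'I_n b c b0 c0 (etrans bc (esym (card_ord n))).
have orbits_x : #|porbits x| = 2 by rewrite -size_porbit_sizes (perm_size x_type).
apply: (card_Pi_gt (x := x) (d := 2)) le_a _ _.
- by rewrite Alt_even /odd_perm card_ord orbits_x addbF.
- exact: Pi_bc.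
- by rewrite card_Alt ?card_ord //; lia.
- by rewrite orbits_x exp3_gt_two_cycles.
Qed.

Lemma set_stab_Pi_gt (A : {set 'I_n}) a : 1 <= #|A| <= n %/ 3 - 1 ->
  a * 3 ^ n <= 10 * n * n`! -> a < #|set_stab A :&: Pi n|.
Proof.
move=> A_bounds le_a; have [b [c [b0 c0 Abc Pi_bc]]] := Pi_three_cycles A_bounds.
have [x xA x_type] : exists2 x : {perm 'I_n}, x @: A = A & has_cycle_type x [:: #|A|; b; c].
  by apply: exists_perm_stab_three_cycles; rewrite ?card_ord //; lia.
rewrite set_stabE; apply: (card_Pi_gt (x := x) (d := 'C(n, #|A|))) le_a _ _.
- exact/astab1P.
- exact: Pi_bc.
- by have := card_set_stab_ge A; rewrite card_ord mulnC.
- by rewrite -size_porbit_sizes (perm_size x_type) exp3_gt_three_cycles //; lia.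
Qed.

End LargeEven.

Theorem lemma3p10 (n : nat) (Hn : 30 < n) (H6 : 6 %| n)
  (M : {group {perm 'I_n}})
  (Mmax : maximal M [set: {perm 'I_n}])
  (Mimp : exists (k l : nat) (P : {set {set 'I_n}}),
            [/\ 2 <= k, 2 <= l, k * l = n, uniform_partition P k l & (M :=: part_stab P)])
  (MnotH : ~ inHfam (gval M)) :
  forall H : {set {perm 'I_n}}, inHfam H -> #|M :&: Pi n| < #|H :&: Pi n|.
Proof.
move=> H HH; have n36 : 36 <= n by lia.
have n_even : ~~ odd n by lia.
have [k [l [P [k2 l2 kl Pu MP]]]] := Mimp.
have l3 : 3 <= l.
  rewrite ltn_neqAle l2 andbT; apply/eqP => l2E; subst l.
  by apply: MnotH; left; exists P; rewrite (_ : n %/ 2 = k) //; lia.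
have M_Pi := part_stab_Pi_le k2 l3 kl Pu; rewrite -MP in M_Pi.
case: HH => [[Q [Qu ->]] | [-> | [i [A [i1 i_le cardA ->]]]]].
- exact: halves_Pi_gt.
- exact: Alt_Pi_gt.
- by apply: set_stab_Pi_gt; rewrite // cardA i1.
Qed.
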